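(* Let $G$ be a simple undirected connected graph on vertices $u_1,\dots,u_n$ with Laplacian $L$, let $u_a\neq u_b$ satisfy $N(u_a)\setminus\{u_b\}=N(u_b)\setminus\{u_a\}$, let $M=(\mathbf e_a-\mathbf e_b)(\mathbf e_a-\mathbf e_b)^T$, $\alpha\in\mathbb R$ and $L^\alpha=L+\alpha M$. Suppose $L$ is almost periodic at $u_p$ with respect to a sequence $(\tau_k)$ of nonzero reals. Then: (1) if $p\in\{a,b\}$ and $2\alpha\tau_k\in\pi(2\mathbb Z+1)$ for all $k$, then $L^\alpha$ exhibits pretty good state transfer between $u_a$ and $u_b$ with respect to $(\tau_k)$; (2) if $p\notin\{a,b\}$, then $L^\alpha$ is almost periodic at $u_p$ with respect to $(\tau_k)$.
   Context: $N(u)$ is the neighbourhood of $u$; $L=D-A$; $\mathbf e_j$ is the standard basis vector of $u_j$. For a real symmetric $H$, $U_H(t)=\exp(-itH)$. $H$ exhibits pretty good state transfer between distinct $u_p,u_q$ with respect to a real sequence $(\tau_k)$ if $\lim_{k\to\infty}U_H(\tau_k)\mathbf e_p=\gamma\mathbf e_q$ for some $\gamma\in\mathbb C$; $H$ is almost periodic at $u_p$ with respect to a sequence $(\tau_k)$ of nonzero reals if $\lim_{k\to\infty}U_H(\tau_k)\mathbf e_p=\gamma\mathbf e_p$ for some $\gamma\in\mathbb C$. *)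

From HB Require Import structures.
From mathcomp Require Import all_boot all_order all_algebra.
From mathcomp Require Export complex.
From mathcomp Require Import all_classical all_reals.
From mathcomp Require Export trigo.

Set Implicit Arguments.
Unset Strict Implicit.
Unset Printing Implicit Defensive.

Import Order.TTheory GRing.Theory Num.Theory.
Local Open Scope complex_scope.
Local Open Scope ring_scope.

Section GraphQuantum.
Variable R : realType.

Definition ebasis (K : pzRingType) (n : nat) (j : 'I_n) : 'cV[K]_n := delta_mx j 0.

Definition simple_graph (n : nat) (adj : rel 'I_n) : Prop :=
  (forall i j, adj i j = adj j i) /\ (forall i, adj i i = false).

Definition connected_graph (n : nat) (adj : rel 'I_n) : Prop :=
  forall i j, connect adj i j.

Definition nbhd (n : nat) (adj : rel 'I_n) (u : 'I_n) : {set 'I_n} :=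
  [set w | adj u w].

Definition laplacian (n : nat) (adj : rel 'I_n) : 'M[R]_n :=
  \matrix_(i, j) ((i == j)%:R * #|nbhd adj i|%:R - (adj i j)%:R).

Definition mx_cvg (m n : nat) (u : nat -> 'M[R[i]]_(m, n)) (l : 'M[R[i]]_(m, n)) : Prop :=
  forall e : R, 0 < e -> exists N : nat, forall k : nat, (N <= k)%N ->
    forall i j, `|u k i j - l i j| < e%:C.

Definition expmx (n : nat) (A : 'M[R[i]]_n) : 'M[R[i]]_n :=
  xget 0 (fun E => mx_cvg (fun N => \sum_(k < N) ((k`!)%:R)^-1 *: A ^+ k) E).

Definition evol (n : nat) (H : 'M[R]_n) (t : R) : 'M[R[i]]_n :=
  expmx ((- 'i%C * t%:C) *: map_mx (fun x : R => x%:C) H).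

Definition pgst (n : nat) (H : 'M[R]_n) (p q : 'I_n) (tau : nat -> R) : Prop :=
  p != q /\
  exists gamma : R[i],
    mx_cvg (fun k => evol H (tau k) *m ebasis _ p) (gamma *: ebasis _ q).

Definition almost_periodic (n : nat) (H : 'M[R]_n) (p : 'I_n) (tau : nat -> R) : Prop :=
  (forall k, tau k != 0) /\
  exists gamma : R[i],
    mx_cvg (fun k => evol H (tau k) *m ebasis _ p) (gamma *: ebasis _ p).

End GraphQuantum.

(* Let u_a, u_b be twins, v = e_a - e_b, w = e_a + e_b and M = v v^T.  The twin
   condition gives L v = mu v with mu = deg a + [a ~ b], and makes the
   transposition (a b) a graph automorphism, hence a symmetry of U_L(t).  As v
   is an eigenvector of the symmetric matrix L, M commutes with L; since
   M e_p = 0 for p outside {a, b} and M w = 0, every power of -it(L + alpha M)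
   agrees with the same power of -itL on e_p and on w, hence so do the
   exponentials: this is part (2).  On v the perturbation adds -2 i alpha t to
   the eigenvalue, so when 2 alpha t is an odd multiple of pi,
   U_{L^alpha}(t) v = - U_L(t) v, and with the action on w this gives
   U_{L^alpha}(t) e_a = U_L(t) e_b.  Part (1) follows, using the automorphism
   to move almost periodicity from u_a to u_b when p = a. *)
From HB Require Import structures.
From mathcomp Require Import all_boot all_order all_algebra.
From mathcomp Require Import complex.
From mathcomp Require Import all_classical all_reals trigo.
From mathcomp Require Import topology normedtype sequences.
From mathcomp Require Import perm ring zify.
Import Order.TTheory GRing.Theory Num.Theory numFieldNormedType.Exports Normc.
Local Open Scope complex_scope.
Local Open Scope ring_scope.

Set Implicit Arguments.
Unset Strict Implicit.
Unset Printing Implicit Defensive.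

Section ComplexSequences.
Local Open Scope classical_set_scope.
Variable R : realType.
Implicit Types (z : R[i]) (s : nat -> R[i]).

Lemma normcE z : `|z| = (normc z)%:C.
Proof. by case: z => x y; rewrite normc_def. Qed.

Lemma normc_lt z (e : R) : (`|z| < e%:C) = (normc z < e).
Proof. by rewrite normcE ltcR. Qed.

Lemma normc_ge0 z : 0 <= normc z.
Proof. by case: z => x y; apply: sqrtr_ge0. Qed.

Lemma normc_real (x : R) : normc x%:C = `|x|.
Proof. by rewrite /= expr0n /= addr0 sqrtr_sqr. Qed.

Lemma normc_Re z : `|complex.Re z| <= normc z.
Proof. by rewrite -lecR -normcE normc_ge_Re. Qed.

Lemma normc_Im z : `|complex.Im z| <= normc z.
Proof.
case: z => x y; rewrite /= -(sqrtr_sqr y) ler_sqrt ?addr_ge0 ?sqr_ge0 //.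
by rewrite lerDr sqr_ge0.
Qed.

Lemma normc_ReIm z : normc z <= `|complex.Re z| + `|complex.Im z|.
Proof.
have normC_real (x : R) : `|x%:C| = `|x|%:C by rewrite normcE normc_real.
rewrite -lecR -normcE rmorphD /= -!normC_real {1}[z]complexE.
by apply: le_trans (ler_normD _ _) _; rewrite normrM normCi mul1r.
Qed.

Lemma normc_sum (I : finType) (F : I -> R[i]) :
  normc (\sum_i F i) <= \sum_i normc (F i).
Proof.
rewrite -lecR -normcE rmorph_sum /=.
by apply: le_trans (ler_norm_sum _ _ _) _; apply: ler_sum => i _; rewrite normcE.
Qed.

Lemma normc_natV k : normc ((k%:R : R[i])^-1) = (k%:R)^-1.
Proof. by rewrite normcV -(rmorph_nat (real_complex R)) normc_real normr_nat. Qed.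

Lemma Re_sum (I : Type) (r : seq I) (P : pred I) (F : I -> R[i]) :
  complex.Re (\sum_(i <- r | P i) F i) = \sum_(i <- r | P i) complex.Re (F i).
Proof. by apply: big_morph => // -[? ?] [? ?]. Qed.

Lemma Im_sum (I : Type) (r : seq I) (P : pred I) (F : I -> R[i]) :
  complex.Im (\sum_(i <- r | P i) F i) = \sum_(i <- r | P i) complex.Im (F i).
Proof. by apply: big_morph => // -[? ?] [? ?]. Qed.

Definition ccvg s (l : R[i]) := forall e : R, 0 < e ->
  exists N : nat, forall k, (N <= k)%N -> normc (s k - l) < e.

Lemma ccvg_near s l :
  ccvg s l <-> forall e : R, 0 < e -> \forall k \near \oo, normc (s k - l) < e.
Proof.
split=> h e /h; first by case=> N HN; exists N.
by case=> N _ HN; exists N.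
Qed.

Lemma ccvg_unique s l1 l2 : ccvg s l1 -> ccvg s l2 -> l1 = l2.
Proof.
move=> h1 h2; apply/eqP; rewrite -subr_eq0; apply/eqP/eq0_normc/le_anti.
rewrite normc_ge0 andbT; apply/ler_addgt0Pr => e e0; rewrite add0r.
have e2 : 0 < e / 2 by rewrite divr_gt0.
have [N1 H1] := h1 _ e2; have [N2 H2] := h2 _ e2.
set x := s (maxn N1 N2).
have -> : l1 - l2 = (x - l2) - (x - l1) by rewrite opprB [RHS]addrC addrA subrK.
apply/ltW/(le_lt_trans (le_normcD _ _)).
by rewrite normcN [e]splitr ltrD ?H1 ?H2 ?leq_maxl ?leq_maxr.
Qed.

Lemma ccvg_cst l : ccvg (fun _ => l) l.
Proof. by move=> e e0; exists 0%N => k _; rewrite subrr normc0. Qed.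

Lemma ccvgD s t l1 l2 : ccvg s l1 -> ccvg t l2 -> ccvg (fun k => s k + t k) (l1 + l2).
Proof.
move=> h1 h2 e e0.
have e2 : 0 < e / 2 by rewrite divr_gt0.
have [N1 H1] := h1 _ e2; have [N2 H2] := h2 _ e2.
exists (maxn N1 N2) => k; rewrite geq_max => /andP[k1 k2].
rewrite opprD addrACA; apply: le_lt_trans (le_normcD _ _) _.
by rewrite [e]splitr ltrD ?H1 ?H2.
Qed.

Lemma ccvgMr s l c : ccvg s l -> ccvg (fun k => s k * c) (l * c).
Proof.
move=> h e e0.
have c1 : 0 < normc c + 1 by rewrite ltr_wpDl ?normc_ge0.
have [N H] := h _ (divr_gt0 e0 c1); exists N => k /H.
rewrite ltr_pdivlMr // -mulrBl normcM; apply: le_lt_trans.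
by rewrite ler_wpM2l ?normc_ge0 // lerDl ler01.
Qed.

Lemma ccvg_sum (I : finType) (s : I -> nat -> R[i]) (l : I -> R[i]) :
  (forall i, ccvg (s i) (l i)) -> ccvg (fun k => \sum_i s i k) (\sum_i l i).
Proof.
move=> h; elim: (index_enum I) => [|i r ih].
  by under eq_fun do rewrite big_nil; rewrite big_nil; apply: ccvg_cst.
by under eq_fun do rewrite big_cons; rewrite big_cons; apply: ccvgD.
Qed.

Lemma ccvg_ReIm s (x y : R) :
  (fun k => complex.Re (s k)) @ \oo --> x ->
  (fun k => complex.Im (s k)) @ \oo --> y -> ccvg s (x +i* y).
Proof.
move=> /cvgrPdist_lt h1 /cvgrPdist_lt h2; apply/ccvg_near => e e0.
have e2 : 0 < e / 2 by rewrite divr_gt0.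
apply: filterS2 (h1 _ e2) (h2 _ e2) => k H1 H2.
apply: le_lt_trans (normc_ReIm _) _.
case: (s k) H1 H2 => u v /= H1 H2.
by rewrite -opprB normrN -[`|v - y|]normrN opprB [e]splitr ltrD.
Qed.

End ComplexSequences.

Section Euler.
Variable R : realType.

Definition expi (th : R) : R[i] := cos th +i* sin th.

Definition cexp_psum (z : R[i]) N := \sum_(k < N) ((k`!)%:R)^-1 * z ^+ k.

Lemma ReIm_iX k :
  complex.Re ('i ^+ k : R[i]) = (~~ odd k)%:R * (-1) ^+ k./2 /\
  complex.Im ('i ^+ k : R[i]) = (odd k)%:R * (-1) ^+ k.-1./2.
Proof.
elim: k => [|k [ihR ihI]]; first by rewrite expr0 /= mulr1 mul0r.
rewrite exprSr ReiNIm ImiRe ihR ihI; split=> //.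
case: k ihR ihI => [|k] ihR ihI /=; first by rewrite !mul0r oppr0.
by rewrite !negbK exprS mulN1r mulrN.
Qed.

Lemma cexp_term (th : R) k : ((k`!)%:R : R[i])^-1 * ('i * th%:C) ^+ k =
  (((k`!)%:R)^-1 * th ^+ k)%:C * 'i ^+ k.
Proof.
rewrite exprMn -rmorphXn -(rmorph_nat (real_complex R)) -fmorphV rmorphM /=.
by rewrite -mulrA [_ * 'i ^+ k]mulrC.
Qed.

(* Euler's formula: the exponential series at i th sums to cos th + i sin th;
   the real and imaginary parts are the cosine and sine series. *)
Lemma cexp_psum_expi th : ccvg (cexp_psum ('i * th%:C)) (expi th).
Proof.
have Re_scal (r : R) (z : R[i]) : complex.Re (r%:C * z) = r * complex.Re z.
  by case: z => x y; rewrite /= !mul0r subr0.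
have Im_scal (r : R) (z : R[i]) : complex.Im (r%:C * z) = r * complex.Im z.
  by case: z => x y; rewrite /= !mul0r addr0.
apply: ccvg_ReIm.
  have -> : (fun N => complex.Re (cexp_psum ('i * th%:C) N)) = series (cos_coeff th).
    apply/funext => N; rewrite /series /= big_mkord /cexp_psum Re_sum.
    apply: eq_bigr => k _; rewrite cexp_term Re_scal (ReIm_iX k).1 cos_coeffE /=.
    ring.
  rewrite cos.unlock; exact: is_cvg_series_cos_coeff.
have -> : (fun N => complex.Im (cexp_psum ('i * th%:C) N)) = series (sin_coeff th).
  apply/funext => N; rewrite /series /= big_mkord /cexp_psum Im_sum.
  apply: eq_bigr => k _; rewrite cexp_term Im_scal (ReIm_iX k).2 sin_coeffE /=.
  ring.
rewrite sin.unlock; exact: is_cvg_series_sin_coeff.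
Qed.

Lemma alternating_subn (f : R -> R) x N : alternating f pi ->
  f (x - pi *+ N) = (-1) ^+ N * f x.
Proof.
move=> h; have := alternatingn h N (x - pi *+ N); rewrite subrK => ->.
by rewrite -signr_odd mulrA -signr_addb addbb expr0 mul1r.
Qed.

Lemma alternating_odd (f : R -> R) x (m : int) : alternating f pi ->
  f (x - pi * (2 * m%:~R + 1)) = - f x.
Proof.
move=> h.
have -> : (2 * m%:~R + 1 : R) = (2 * m + 1)%:~R by rewrite rmorphD rmorphM /= rmorph1.
case: m => k.
  have -> : (2 * Posz k + 1 = Posz (2 * k)%N.+1)%R by lia.
  rewrite -[(Posz _)%:~R]/(((2 * k)%N.+1)%:R : R) mulr_natr alternating_subn //.
  by rewrite -signr_odd /= oddM /= mulN1r.
have -> : (2 * Negz k + 1 = - Posz (2 * k)%N.+1)%R by rewrite NegzE; lia.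
rewrite rmorphN /= -[(Posz _)%:~R]/(((2 * k)%N.+1)%:R : R) mulrN opprK mulr_natr.
by rewrite alternatingn // -signr_odd /= oddM /= mulN1r.
Qed.

Lemma expi_sub_oddpi th (m : int) : expi (th - pi * (2 * m%:~R + 1)) = - expi th.
Proof. by rewrite /expi (alternating_odd _ _ (@cosDpi R)) (alternating_odd _ _ (@sinDpi R)). Qed.

End Euler.

Section MatrixSequences.
Local Open Scope classical_set_scope.
Variable R : realType.

Lemma mx_cvg_entrywise m n (u : nat -> 'M[R[i]]_(m, n)) l :
  mx_cvg u l <-> forall i j, ccvg (fun k => u k i j) (l i j).
Proof.
split=> [h i j e /h [N HN]|h e e0].
  by exists N => k /HN /(_ i j); rewrite normc_lt.
have : \forall k \near \oo, forall i j, normc (u k i j - l i j) < e.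
  apply: filter_forall => i; apply: filter_forall => j.
  by have /ccvg_near := h i j; apply.
by case=> N _ HN; exists N => k /HN H i j; rewrite normc_lt.
Qed.

Lemma mx_cvg_unique m n (u : nat -> 'M[R[i]]_(m, n)) l1 l2 :
  mx_cvg u l1 -> mx_cvg u l2 -> l1 = l2.
Proof.
move=> /mx_cvg_entrywise h1 /mx_cvg_entrywise h2; apply/matrixP => i j.
exact: ccvg_unique (h1 i j) (h2 i j).
Qed.

Lemma mx_cvg_mulmxr m n p (u : nat -> 'M[R[i]]_(m, n)) l (z : 'M[R[i]]_(n, p)) :
  mx_cvg u l -> mx_cvg (fun k => u k *m z) (l *m z).
Proof.
move=> /mx_cvg_entrywise h; apply/mx_cvg_entrywise => i j.
under eq_fun do rewrite mxE; rewrite mxE.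
by apply: ccvg_sum => l'; apply: ccvgMr.
Qed.

Lemma mx_cvg_scale m n (s : nat -> R[i]) c (z : 'M[R[i]]_(m, n)) :
  ccvg s c -> mx_cvg (fun k => s k *: z) (c *: z).
Proof.
move=> h; apply/mx_cvg_entrywise => i j.
by under eq_fun do rewrite mxE; rewrite mxE; apply: ccvgMr.
Qed.

End MatrixSequences.

Section MatrixExponential.
Variables (R : realType) (n : nat).
Implicit Types (A B : 'M[R[i]]_n) (z : 'cV[R[i]]_n).

Definition expmx_psum A N := \sum_(k < N) ((k`!)%:R)^-1 *: A ^+ k.

Definition mxnorm1 A : R := \sum_i \sum_j normc (A i j).

Lemma mxnorm1_ge0 A : 0 <= mxnorm1 A.
Proof. by apply: sumr_ge0 => i _; apply: sumr_ge0 => j _; apply: normc_ge0. Qed.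

Lemma normc_mxpow_le A k i j : normc ((A ^+ k) i j) <= mxnorm1 A ^+ k.
Proof.
elim: k i j => [|k ih] i j.
  by rewrite expr0 expr0 mxE; case: (i == j); rewrite ?normc1 ?normc0.
rewrite exprSr -mulmxE mxE; apply: le_trans (normc_sum _) _.
apply: (@le_trans _ _ (\sum_l mxnorm1 A ^+ k * normc (A l j))).
  by apply: ler_sum => l _; rewrite normcM ler_wpM2r ?normc_ge0.
rewrite -mulr_sumr exprSr ler_wpM2l ?exprn_ge0 ?mxnorm1_ge0 //.
apply: ler_sum => l _; rewrite (bigD1 j) //= lerDl.
by apply: sumr_ge0 => j' _; apply: normc_ge0.
Qed.

(* Each entry of the exponential series is dominated by the real series of
   exp (mxnorm1 A), so its real and imaginary parts converge absolutely. *)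
Lemma expmx_psum_cvg_ex A : exists E, mx_cvg (expmx_psum A) E.
Proof.
set t := fun k => ((k`!)%:R)^-1 *: A ^+ k.
have tb k i j : normc (t k i j) <= exp_coeff (mxnorm1 A) k.
  rewrite /t mxE normcM normc_natV /exp_coeff /= mulrC.
  by rewrite ler_wpM2r ?invr_ge0 ?ler0n ?normc_mxpow_le.
have abs_cvg (u : R ^nat) : (forall k, `|u k| <= exp_coeff (mxnorm1 A) k) ->
    cvgn (series u).
  move=> hu; apply: normed_cvg.
  apply: (series_le_cvg (fun k => normr_ge0 _) _ hu); last first.
    exact: is_cvg_series_exp_coeff.
  by move=> k; apply: le_trans (normr_ge0 _) (hu k).
exists (\matrix_(i, j) (limn (series (fun k => complex.Re (t k i j))) +i*
                         limn (series (fun k => complex.Im (t k i j))))).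
apply/mx_cvg_entrywise => i j; rewrite mxE; apply: ccvg_ReIm.
  have -> : (fun N => complex.Re (expmx_psum A N i j)) =
            series (fun k => complex.Re (t k i j)).
    by apply/funext => N; rewrite /series /= big_mkord /expmx_psum summxE Re_sum.
  by apply: abs_cvg => k; apply: le_trans (normc_Re _) (tb k i j).
have -> : (fun N => complex.Im (expmx_psum A N i j)) =
          series (fun k => complex.Im (t k i j)).
  by apply/funext => N; rewrite /series /= big_mkord /expmx_psum summxE Im_sum.
by apply: abs_cvg => k; apply: le_trans (normc_Im _) (tb k i j).
Qed.

Lemma expmx_cvg A : mx_cvg (expmx_psum A) (expmx A).
Proof. exact: (xgetPex 0 (expmx_psum_cvg_ex A)). Qed.

Lemma expmx_psum_mulmx A z N :
  expmx_psum A N *m z = \sum_(k < N) ((k`!)%:R)^-1 *: (A ^+ k *m z).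
Proof. by rewrite mulmx_suml; apply: eq_bigr => k _; rewrite scalemxAl. Qed.

Lemma expmx_mulmx_eq A B z z' :
  (forall k, A ^+ k *m z = B ^+ k *m z') -> expmx A *m z = expmx B *m z'.
Proof.
move=> h; have := mx_cvg_mulmxr z (expmx_cvg A).
have -> : (fun N => expmx_psum A N *m z) = (fun N => expmx_psum B N *m z').
  by apply/funext => N; rewrite !expmx_psum_mulmx; apply: eq_bigr => k _; rewrite h.
by move/mx_cvg_unique; apply; apply: mx_cvg_mulmxr; apply: expmx_cvg.
Qed.

Lemma mxpow_eigen A z lam k : A *m z = lam *: z -> A ^+ k *m z = lam ^+ k *: z.
Proof.
move=> h; elim: k => [|k ih]; first by rewrite !expr0 mul1mx scale1r.
by rewrite exprS -mulmxE -mulmxA ih -scalemxAr h scalerA exprSr.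
Qed.

Lemma expmx_eigen A z (th : R) :
  A *m z = ('i * th%:C) *: z -> expmx A *m z = expi th *: z.
Proof.
move=> h; have := mx_cvg_mulmxr z (expmx_cvg A).
have -> : (fun N => expmx_psum A N *m z) = (fun N => cexp_psum ('i * th%:C) N *: z).
  apply/funext => N; rewrite expmx_psum_mulmx /cexp_psum scaler_suml.
  by apply: eq_bigr => k _; rewrite (mxpow_eigen _ h) scalerA.
by move/mx_cvg_unique; apply; apply: mx_cvg_scale; apply: cexp_psum_expi.
Qed.

Lemma mxpow_perturb_mulmx (X P : 'M[R[i]]_n) z (beta : R[i]) k :
  P *m X = X *m P -> P *m z = 0 -> (X + beta *: P) ^+ k *m z = X ^+ k *m z.
Proof.
move=> hc hz; have cX j : P *m X ^+ j = X ^+ j *m P by apply: commrX.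
elim: k => [|k ih]; first by rewrite !expr0.
rewrite exprS -mulmxE -mulmxA ih mulmxDl -scalemxAl [P *m _]mulmxA cX.
by rewrite -[_ *m P *m z]mulmxA hz mulmx0 scaler0 addr0 mulmxA mulmxE -exprS.
Qed.

Definition permx (s : {perm 'I_n}) A := \matrix_(i, j) A (s i) (s j).

Lemma permxM s A B : permx s (A * B) = permx s A * permx s B.
Proof.
apply/matrixP => i j; rewrite -!mulmxE !mxE (reindex_inj (@perm_inj _ s)) /=.
by apply: eq_bigr => l _; rewrite !mxE.
Qed.

Lemma permxX s A k : permx s (A ^+ k) = permx s A ^+ k.
Proof.
elim: k => [|k ih]; last by rewrite !exprS permxM ih.
by apply/matrixP => i j; rewrite !expr0 !mxE (inj_eq (@perm_inj _ s)).
Qed.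

Lemma expmx_permx s A : permx s A = A -> permx s (expmx A) = expmx A.
Proof.
move=> h; apply: (mx_cvg_unique _ (expmx_cvg A)).
have -> : expmx_psum A = (fun N => permx s (expmx_psum A N)).
  apply/funext => N; apply/matrixP => i j; rewrite mxE !summxE.
  by apply: eq_bigr => k _; rewrite -{1}h -permxX !mxE.
move/mx_cvg_entrywise: (expmx_cvg A) => H; apply/mx_cvg_entrywise => i j.
by under eq_fun do rewrite mxE; rewrite mxE; apply: H.
Qed.

End MatrixExponential.

Lemma ebasisE (K : pzRingType) n (j i : 'I_n) (k : 'I_1) :
  ebasis K j i k = (i == j)%:R.
Proof. by rewrite mxE [k]ord1 eqxx andbT. Qed.

Lemma mulmx_ebasis (K : pzRingType) m n (A : 'M[K]_(m, n)) j :
  A *m ebasis K j = col j A.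
Proof. by rewrite colE. Qed.

Lemma mulmx_twin_transfer (K : numFieldType) n (U U' : 'M[K]_n) (ea eb : 'cV[K]_n) E :
  U' *m (ea + eb) = U *m (ea + eb) ->
  U' *m (ea - eb) = - E *: (ea - eb) -> U *m (ea - eb) = E *: (ea - eb) ->
  U' *m ea = U *m eb.
Proof.
move=> hw hv' hv; apply: (@scalerI _ _ 2%:R); first by rewrite pnatr_eq0.
have e2a : 2%:R *: ea = (ea + eb) + (ea - eb).
  by rewrite addrACA subrr addr0 scaler_nat mulr2n.
have e2b : 2%:R *: eb = (ea + eb) - (ea - eb).
  by rewrite opprB addrC addrA subrK scaler_nat mulr2n.
by rewrite !scalemxAr e2a e2b mulmxDr hw hv' mulmxBr hv scaleNr.
Qed.

Section TwinVertices.
Variables (R : realType) (n : nat) (adj : rel 'I_n) (a b : 'I_n).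
Hypothesis simple : simple_graph adj.
Hypothesis a_neq_b : a != b.
Hypothesis twins : nbhd adj a :\ b = nbhd adj b :\ a.

Local Notation L := (laplacian R adj).
Local Notation M := ((ebasis R a - ebasis R b) *m (ebasis R a - ebasis R b)^T).
Local Notation deg i := #|nbhd adj i|.
Local Notation e j := (ebasis R[i] j).
Local Notation vab := (e a - e b).
Local Notation wab := (e a + e b).

Let adj_sym : forall i j, adj i j = adj j i := simple.1.
Let adj_irr : forall i, adj i i = false := simple.2.

Lemma twin_adj w : w != a -> w != b -> adj a w = adj b w.
Proof.
move=> wa wb; have : (w \in nbhd adj a :\ b) = (w \in nbhd adj b :\ a) by rewrite twins.
by rewrite !in_setD1 !inE wa wb.
Qed.

Lemma deg_twin : deg a = deg b.
Proof. by rewrite (cardsD1 b) (cardsD1 a (nbhd adj b)) twins !inE adj_sym. Qed.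

Lemma laplacianE i j : L i j = (i == j)%:R * (deg i)%:R - (adj i j)%:R.
Proof. by rewrite mxE. Qed.

Lemma laplacian_sym i j : L i j = L j i.
Proof.
by rewrite !laplacianE eq_sym adj_sym; have [->|_] := eqVneq j i; rewrite ?mul0r.
Qed.

Definition twin_swap : {perm 'I_n} := tperm a b.

Lemma adj_swap i j : adj (twin_swap i) (twin_swap j) = adj i j.
Proof.
rewrite /twin_swap.
case: (tpermP a b i) => [->|->|/eqP ia /eqP ib];
case: (tpermP a b j) => [->|->|/eqP ja /eqP jb];
rewrite ?adj_irr // ?[adj b a]adj_sym // ?(twin_adj ja jb) //
  ?[adj j _]adj_sym ?[adj i _]adj_sym ?(twin_adj ia ib) //.
Qed.

Lemma laplacian_swap i j : L (twin_swap i) (twin_swap j) = L i j.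
Proof.
rewrite !laplacianE adj_swap (inj_eq (@perm_inj _ twin_swap)); congr (_ * _%:R - _).
by rewrite /twin_swap; case: (tpermP a b i) => [->|->|_ _]; rewrite ?deg_twin.
Qed.

Definition twin_eigenvalue : R := (deg a)%:R + (adj a b)%:R.

Lemma laplacian_twin_diff i :
  L i a - L i b = twin_eigenvalue * ((i == a)%:R - (i == b)%:R).
Proof.
rewrite /twin_eigenvalue !laplacianE.
have [->|ia] := eqVneq i a; first by rewrite (negPf a_neq_b) adj_irr /=; ring.
have [->|ib] := eqVneq i b; first by rewrite adj_irr [adj b a]adj_sym -deg_twin /=; ring.
by rewrite [adj i a]adj_sym [adj i b]adj_sym twin_adj //=; ring.
Qed.

Definition generator (t : R) : 'M[R[i]]_n :=
  (- 'i * t%:C) *: map_mx (fun x : R => x%:C) L.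
Definition Mc : 'M[R[i]]_n := map_mx (fun x : R => x%:C) M.

Lemma vab_entry i (k : 'I_1) : vab i k = (i == a)%:R - (i == b)%:R.
Proof. by rewrite [k]ord1 !mxE !eqxx !andbT. Qed.

Lemma generatorE t i j : generator t i j = (- 'i * t%:C) * (L i j)%:C.
Proof. by rewrite !mxE. Qed.

Lemma Mc_rank_one : Mc = vab *m vab^T.
Proof.
apply/matrixP => i j; rewrite !mxE !big_ord1 ![(_^T) _ _]mxE !vab_entry.
rewrite ![(ebasis R a - ebasis R b) _ _]mxE ![(- ebasis R b) _ _]mxE !ebasisE.
by rewrite rmorphM rmorphB rmorphB /= !rmorph_nat.
Qed.

Lemma generator_tr t : (generator t)^T = generator t.
Proof. by apply/matrixP => i j; rewrite mxE !generatorE laplacian_sym. Qed.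

Lemma generator_vab t :
  generator t *m vab = (- 'i * t%:C * twin_eigenvalue%:C) *: vab.
Proof.
rewrite mulmxBr !mulmx_ebasis; apply/matrixP => i k.
rewrite [k]ord1 !mxE -!laplacianE !eqxx !andbT.
rewrite -mulrN -mulrDr -rmorphB laplacian_twin_diff.
by rewrite rmorphM rmorphB /= !rmorph_nat mulrA.
Qed.

Lemma Mc_generator_comm t : Mc *m generator t = generator t *m Mc.
Proof.
have h : vab^T *m generator t = (generator t *m vab)^T by rewrite trmx_mul generator_tr.
rewrite Mc_rank_one -mulmxA h generator_vab linearZ /= -scalemxAr mulmxA.
by rewrite generator_vab scalemxAl.
Qed.

Lemma Mc_vab : Mc *m vab = 2%:R *: vab.
Proof.
rewrite Mc_rank_one -mulmxA.
have -> : vab^T *m vab = (2%:R : R[i])%:M.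
  apply/matrixP => x y; rewrite [x]ord1 [y]ord1 mulmxBr !mulmx_ebasis.
  rewrite !mxE !eqxx (negPf a_neq_b) eq_sym (negPf a_neq_b) /= mulr1n.
  ring.
by rewrite -scalemx1 -scalemxAr mulmx1.
Qed.

Lemma Mc_off_twins p : p != a -> p != b -> Mc *m e p = 0.
Proof.
move=> pa pb; rewrite Mc_rank_one -mulmxA mulmx_ebasis.
have -> : col p vab^T = 0.
  by apply/matrixP => i j; rewrite !mxE (negPf pa) (negPf pb) subrr.
by rewrite mulmx0.
Qed.

Lemma Mc_wab : Mc *m wab = 0.
Proof.
rewrite Mc_rank_one -mulmxA mulmxDr !mulmx_ebasis.
have -> : col a vab^T + col b vab^T = 0.
  apply/matrixP => x y; rewrite [x]ord1 !mxE !eqxx (negPf a_neq_b) eq_sym (negPf a_neq_b) /=; ring.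
by rewrite mulmx0.
Qed.

Lemma evolE t : evol L t = expmx (generator t).
Proof. by []. Qed.

Lemma evol_perturbE t (al : R) :
  evol (L + al *: M) t = expmx (generator t + (- 'i * t%:C * al%:C) *: Mc).
Proof.
by rewrite /evol map_mxD map_mxZ scalerDr scalerA.
Qed.

Lemma evol_perturb_off_twins t (al : R) p : p != a -> p != b ->
  evol (L + al *: M) t *m e p = evol L t *m e p.
Proof.
move=> pa pb; rewrite evol_perturbE evolE; apply: expmx_mulmx_eq => k.
exact: mxpow_perturb_mulmx (Mc_generator_comm t) (Mc_off_twins pa pb).
Qed.

Lemma evol_perturb_twin t (al : R) (m : int) :
  2 * al * t = pi * (2 * m%:~R + 1) ->
  evol (L + al *: M) t *m e a = evol L t *m e b.
Proof.
move=> h; rewrite evol_perturbE evolE; set th := - (t * twin_eigenvalue).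
apply: (@mulmx_twin_transfer _ _ _ _ _ _ (expi th)).
- apply: expmx_mulmx_eq => k.
  exact: mxpow_perturb_mulmx (Mc_generator_comm t) Mc_wab.
- rewrite -(expi_sub_oddpi th m); apply: expmx_eigen.
  rewrite mulmxDl generator_vab -scalemxAl Mc_vab scalerA -scalerDl.
  congr (_ *: _); rewrite -h /th rmorphB rmorphN !rmorphM /= rmorph_nat; ring.
- apply: expmx_eigen; rewrite generator_vab; congr (_ *: _).
  by rewrite /th rmorphN rmorphM /=; ring.
Qed.

Lemma evol_swap t x j : evol L t (twin_swap x) (twin_swap j) = evol L t x j.
Proof.
have gen_swap : permx twin_swap (generator t) = generator t.
  by apply/matrixP => i k; rewrite mxE !generatorE laplacian_swap.
by rewrite evolE -[in RHS](expmx_permx gen_swap) mxE.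
Qed.

Lemma twin_swap_cvg (tau : nat -> R) (g : R[i]) :
  mx_cvg (fun k => evol L (tau k) *m e a) (g *: e a) ->
  mx_cvg (fun k => evol L (tau k) *m e b) (g *: e b).
Proof.
move/mx_cvg_entrywise => h; apply/mx_cvg_entrywise => x y.
have := h (twin_swap x) y; congr ccvg.
  by apply/funext => k; rewrite !mulmx_ebasis !mxE -[RHS]evol_swap /twin_swap tpermR.
by rewrite !mxE /twin_swap (canF_eq (tpermK a b)) tpermL.
Qed.

End TwinVertices.

Unset Implicit Arguments.

Theorem theorem3p2 (R : realType) (n : nat) (adj : rel 'I_n)
    (a b p : 'I_n) (alpha : R) (tau : nat -> R) :
  simple_graph adj -> connected_graph adj ->
  a != b ->
  nbhd adj a :\ b = nbhd adj b :\ a ->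
  let L := laplacian R adj in
  let M := (ebasis R a - ebasis R b) *m (ebasis R a - ebasis R b)^T in
  let La := L + alpha *: M in
  almost_periodic L p tau ->
  ((p \in [:: a; b]) ->
     (forall k, exists m : int, 2 * alpha * tau k = pi * (2 * m%:~R + 1)) ->
     pgst La a b tau) /\
  ((p \notin [:: a; b]) -> almost_periodic La p tau).
Proof.
move=> simple _ ab twins L M La [tau_neq0 [g hg]]; rewrite {}/La {}/M {}/L in hg *.
split=> [p_ab odd_tau | p_ab]; split=> //; exists g.
  under eq_fun => k do
    [have [m hm] := odd_tau k; rewrite (evol_perturb_twin simple ab twins hm)].
  by move: p_ab hg; rewrite !inE => /orP[]/eqP-> //; apply: twin_swap_cvg.
move: p_ab; rewrite !inE negb_or => /andP[pa pb].
by under eq_fun do rewrite evol_perturb_off_twins //.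
Qed.
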